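(* Let $G$ be a Lindelöf Hausdorff topological group whose underlying space is basically disconnected. Then either $G$ is a $P$-space, or $G$ has a nondiscrete topological quotient group $G/N$ (with $N$ a closed normal subgroup) of countable pseudocharacter which contains an open subgroup that is Boolean and basically disconnected.
   Context: All spaces are Tychonoff. A space is basically disconnected if the closure of every cozero set in it is open. A space is a $P$-space if every $G_\delta$-subset is open. For a topological group, countable pseudocharacter means the identity element is a $G_\delta$-set. A group is Boolean if every element has order at most $2$. The quotient $G/N$ carries the quotient topology. *)

From HB Require Import structures.
From mathcomp Require Import all_boot all_order all_algebra.
From mathcomp Require Import all_classical all_reals all_analysis.
From mathcomp Require Import Rstruct Rstruct_topology.
From Stdlib Require Import Reals.

Set Implicit Arguments.
Unset Strict Implicit.
Unset Printing Implicit Defensive.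

Local Open Scope classical_set_scope.

Definition is_group (G : Type) (mul : G -> G -> G) (inv : G -> G) (e : G) :=
  [/\ forall x y z, mul x (mul y z) = mul (mul x y) z,
      forall x, mul e x = x, forall x, mul x e = x,
      forall x, mul (inv x) x = e & forall x, mul x (inv x) = e].

Definition topological_group (G : topologicalType) (mul : G -> G -> G)
    (inv : G -> G) (e : G) :=
  [/\ is_group mul inv e,
      continuous (fun p : G * G => mul p.1 p.2) & continuous inv].

Definition lindelof (T : topologicalType) :=
  forall (I : Type) (U : I -> set T), (forall i, open (U i)) ->
    \bigcup_i U i = setT ->
    exists J : set I, countable J /\ \bigcup_(i in J) U i = setT.

Definition cozero (T : topologicalType) (f : T -> R) := [set x | f x <> 0%R].

Definition basically_disconnected (T : topologicalType) :=
  forall f : T -> R, continuous f -> open (closure (cozero f)).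

Definition G_delta (T : topologicalType) (A : set T) :=
  exists F : nat -> set T, (forall n, open (F n)) /\ A = \bigcap_n F n.

Definition P_space (T : topologicalType) :=
  forall A : set T, G_delta A -> open A.

Definition discrete_top (T : topologicalType) := forall A : set T, open A.

Definition subgroup (G : Type) (mul : G -> G -> G) (inv : G -> G) (e : G)
    (K : set G) :=
  [/\ K e, forall x y, K x -> K y -> K (mul x y) & forall x, K x -> K (inv x)].

Definition normal_subgroup (G : Type) (mul : G -> G -> G) (inv : G -> G) (e : G)
    (N : set G) :=
  subgroup mul inv e N /\ forall g x, N x -> N (mul (mul g x) (inv g)).

Definition group_hom (G H : Type) (mulG : G -> G -> G) (mulH : H -> H -> H)
    (f : G -> H) := forall x y, f (mulG x y) = mulH (f x) (f y).

Definition open_map (T U : topologicalType) (f : T -> U) :=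
  forall A : set T, open A -> open (f @` A).

(** [H] (with its operations) is (topologically isomorphic to) the quotient
    group G/N with the quotient topology, witnessed by [f]: a continuous open
    surjective homomorphism with kernel N.  (A continuous open surjection is a
    quotient map, so H carries the quotient topology of G/N.) *)
Definition quotient_group_by (G H : topologicalType)
    (mulG : G -> G -> G) (mulH : H -> H -> H) (eH : H) (N : set G) (f : G -> H) :=
  [/\ group_hom mulG mulH f, continuous f, open_map f,
      (forall y, exists x, f x = y) & N = f @^-1` [set eH]].

Definition countable_pseudocharacter (H : topologicalType) (eH : H) :=
  G_delta [set eH].

Definition boolean_set (H : Type) (mul : H -> H -> H) (e : H) (K : set H) :=
  forall x, K x -> mul x x = e.

(* If G is not a P-space, there are open neighbourhoods U_m of e whose
   intersection is not a neighbourhood of e.  A Lindelof group is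
   omega-narrow, so the U_m extend to a countable family of neighbourhoods of
   e closed under square roots and under the conjugation witnesses of
   narrowness; its intersection N is a closed normal subgroup inside every U_m,
   hence not open, and H = G/N is a nondiscrete Lindelof basically
   disconnected group in which e is a G_delta.
   In H the set O of points x with x^2 <> e is an F_sigma, so by Lindelofness
   it is covered by countably many clopen sets C with C disjoint from C^-1
   (basically disconnected Tychonoff spaces are zero-dimensional).
   Disjointifying gives an open A with A disjoint from A^-1 and O contained in
   A u A^-1; A is a countable union of clopen sets, hence a cozero set, so its
   closure is open and cannot contain the fixed point e of inversion.  Thus e
   has a neighbourhood of involutions, which generates an open, hence clopen,
   Boolean subgroup of H. *)

From HB Require Import structures.
From mathcomp Require Import all_boot all_order all_algebra.
From mathcomp Require Import all_classical all_reals all_analysis.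
From mathcomp Require Import Rstruct Rstruct_topology.
From mathcomp Require Import lra.
From Stdlib Require Import Reals.
Import Order.TTheory GRing.Theory Num.Theory.

Set Implicit Arguments.
Unset Printing Implicit Defensive.

Local Open Scope classical_set_scope.
Local Open Scope ring_scope.

(** * Basically disconnected and Lindelof spaces *)

Lemma cozeroE (T : topologicalType) (f : T -> R) : cozero f = [set x | f x != 0].
Proof. by apply/seteqP; split => x /= /eqP. Qed.

Lemma basically_disconnected_clopen_nbhs (T : topologicalType) :
  completely_regular_space T -> basically_disconnected T ->
  forall [x : T] [U : set T], nbhs x U -> exists C, [/\ clopen C, C x & C `<=` U].
Proof.
move=> crT bdT x U Ux.
have cB : closed (~` U°) by apply: open_closedC; exact: open_interior.
have /(@uniform_separatorP _ R) [f [cf _ f0 f1]] := crT x _ cB (fun nUx => nUx Ux).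
have fx : f x = 0 by apply: f0; exists x.
pose phi y := Num.min (f y) (1 / 2) - 1 / 2.
have cphi : continuous phi.
  move=> y; apply: (@continuousB R R^o T) => //; last exact: cvg_cst.
  exact: (continuous_min (cf y) (cvg_cst _)).
have phi_small y : cozero phi y -> f y <= 1 / 2.
  by rewrite cozeroE /phi /=; case: leP => // _; rewrite subrr eqxx.
exists (closure (cozero phi)); split.
- by split; [exact: bdT | exact: closed_closure].
- by apply: subset_closure; rewrite cozeroE /= /phi fx min_l //; lra.
- have fle_closed : closed [set y | f y <= 1 / 2].
    exact: (preimage_closed (fun y _ => cf y) (@closed_le _ (1 / 2))).
  move=> y /(closureS phi_small); rewrite -(closure_id _).1 //= => fy.
  apply: contrapT => nUy; have : f y = 1 by apply: f1; exists y => // /interior_subset.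
  lra.
Qed.

Section CountableClopenUnion.
Context {T : topologicalType} {c : nat -> set T}.
Hypothesis clopen_c : forall k, clopen (c k).

Lemma clopen_bigsetU n : clopen (\big[setU/set0]_(k < n) c k).
Proof.
elim: n => [|n IHn]; first by rewrite big_ord0; exact: clopen0.
by rewrite big_ord_recr; exact: clopenU.
Qed.

Lemma clopen_seqDU k : clopen (seqDU c k).
Proof.
have [oU cU] := clopen_bigsetU k.
rewrite /seqDU setDE; apply: clopenI => //.
by split; [exact: closed_openC | exact: open_closedC].
Qed.

Lemma bigcup_clopen_cozero :
  exists2 f : T -> R, continuous f & cozero f = \bigcup_k c k.
Proof.
pose D := seqDU c; pose idx x := xget 0%N [set k : nat | D k x].
pose f x : R := \1_(\bigcup_k D k) x / (idx x).+1%:R.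
have fD k x : D k x -> f x = (k.+1%:R)^-1.
  move=> Dkx; rewrite /f indicE mem_set; last by exists k.
  rewrite mul1r /idx (@xget_unique _ _ _ k) // => m Dmx.
  by apply: (trivIset_seqDU c) => //; exists x.
have fN x : ~ (\bigcup_k D k) x -> f x = 0.
  by move=> nDx; rewrite /f indicE memNset ?mul0r.
exists f; last first.
  rewrite seqDU_bigcup_eq cozeroE; apply/seteqP; split => x /=.
    by move=> /eqP fx; apply: contrapT => /fN.
  by case=> k _ /fD ->; rewrite invr_eq0 pnatr_eq0.
move=> x; have [[k _ Dkx]|nDx] := pselect ((\bigcup_k D k) x).
  have Dk_nbhs : nbhs x (D k).
    by apply: open_nbhs_nbhs; split => //; case: (clopen_seqDU k).
  apply: cvg_near_cst; apply: filterS Dk_nbhs => y Dky.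
  by rewrite (fD _ _ Dky) (fD _ _ Dkx).
rewrite /continuous_at (fN _ nDx); apply/(@cvgrPdist_lt _ R^o) => eps eps_gt0.
pose n := Num.truncn eps^-1.
have Wx : nbhs x (~` \big[setU/set0]_(k < n) c k).
  apply: open_nbhs_nbhs; split; first by apply: closed_openC; case: (clopen_bigsetU n).
  by rewrite bigsetU_seqDU => /(@bigsetU_bigcup _ D n).
apply: filterS Wx => y nWy; rewrite sub0r normrN.
have [[m _ Dmy]|/fN ->] := pselect ((\bigcup_k D k) y); last by rewrite normr0.
rewrite (fD _ _ Dmy) ger0_norm ?invr_ge0 ?ler0n // invf_plt ?posrE ?ltr0n //.
have nm : (n <= m)%nat.
  rewrite leqNgt; apply/negP => mn; apply: nWy.
  by rewrite bigsetU_seqDU -bigcup_mkord; exists m.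
by apply: lt_le_trans (truncnS_gt _) _; rewrite ler_nat ltnS.
Qed.

End CountableClopenUnion.

Section Involution.
Context {T : topologicalType} (h : T -> T).
Hypotheses (hK : involutive h) (h_cont : continuous h).

Lemma clopen_involution_split [c : nat -> set T] :
  (forall k, clopen (c k)) -> (forall k, c k `&` h @^-1` c k = set0) ->
  exists A : nat -> set T, [/\ forall k, clopen (A k),
    (\bigcup_k A k) `&` h @^-1` (\bigcup_k A k) = set0 &
    \bigcup_k c k `<=` (\bigcup_k A k) `|` h @^-1` (\bigcup_k A k)].
Proof.
move=> clopen_c c_h0.
pose c' k := c k `|` h @^-1` c k.
have clopen_c' k : clopen (c' k).
  by apply: clopenU => //; apply: preimage_clopen.
have c'_h k y : c' k (h y) = c' k y.
  by rewrite /c' /= hK; apply/propext; exact: or_comm.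
have c'E k y : c' k y = (c k y \/ c k (h y)) by [].
clearbody c'.
have D_h k y : seqDU c' k (h y) = seqDU c' k y.
  rewrite /seqDU -!bigcup_mkord /= c'_h; congr (_ /\ ~ _).
  by apply/propext; split=> -[j jk cj]; exists j; rewrite // ?c'_h // -c'_h.
exists (fun k => c k `&` seqDU c' k); split.
- by move=> k; apply: clopenI => //; exact: clopen_seqDU.
- apply/seteqP; split => // y [[k _ [cky Dky]] [m _ [cmhy Dmhy]]].
  have km : k = m.
    by apply: (trivIset_seqDU c') => //; exists y; split => //; rewrite -D_h.
  by subst m; have /seteqP[+ _] := c_h0 k; apply; split.
- move=> y [k _ cky]; have [m _ Dmy] : (\bigcup_m seqDU c' m) y.
    by rewrite -seqDU_bigcup_eq; exists k => //; rewrite c'E; left.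
  have [cmy|cmhy] : c m y \/ c m (h y) by rewrite -c'E; case: Dmy.
  + by left; exists m.
  + by right; exists m => //; split; rewrite ?D_h.
Qed.

Lemma involution_fixpoint_notin_closure (A : set T) (x : T) : h x = x ->
  open A -> A `&` h @^-1` A = set0 -> open (closure A) -> ~ closure A x.
Proof.
move=> hx oA AhA0 oclA clAx.
have clAx_nbhs : nbhs x (closure A `&` h @^-1` closure A).
  apply: filterI; first exact: open_nbhs_nbhs.
  by apply: h_cont; rewrite hx; exact: open_nbhs_nbhs.
have [z [Az [_ clAhz]]] := clAx _ clAx_nbhs.
have hA_nbhs : nbhs (h z) (h @^-1` A).
  apply: open_nbhs_nbhs; split; last by rewrite /= hK.
  by apply: open_comp => // y _; exact: h_cont.
have [w Aw] := clAhz _ hA_nbhs.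
by rewrite -[False]/(set0 w) -AhA0.
Qed.

End Involution.

Lemma lindelof_closed_cover (T : topologicalType) [K : set T] [I : Type]
    [V : I -> set T] :
  lindelof T -> closed K -> (forall i, open (V i)) -> K `<=` \bigcup_i V i ->
  exists2 J : set I, countable J & K `<=` \bigcup_(i in J) V i.
Proof.
move=> lT cK oV KV.
pose W (o : option I) := if o is Some i then V i else ~` K.
have oW o : open (W o) by case: o => [i|]; [exact: oV | exact: closed_openC].
have W_cover : \bigcup_o W o = [set: T].
  apply/seteqP; split => // x _; have [Kx|nKx] := pselect (K x).
    by have [i _ Vix] := KV x Kx; exists (Some i).
  by exists None.
have [J [cJ JW]] := lT _ W oW W_cover.
exists (Some @^-1` J).
  case/countable_injP: cJ => f f_inj; apply/countable_injP; exists (f \o Some).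
  by move=> i j /[!inE] Ji Jj /f_inj => /(_ (mem_set Ji) (mem_set Jj)) [].
move=> x Kx; have : [set: T] x by [].
by rewrite -JW => -[[i|] Ji Wx] //; exists i.
Qed.

Lemma countable_sub_range {T : choiceType} (x0 : T) [J : set T] :
  countable J -> exists g : nat -> T, J `<=` range g.
Proof.
case/countable_injP => f f_inj.
exists (fun n => xget x0 [set x | J x /\ f x = n]) => x Jx; exists (f x) => //.
have [Jy fy] : [set y | J y /\ f y = f x] (xget x0 [set y | J y /\ f y = f x]).
  exact: (xgetI _ (conj Jx erefl)).
by apply: f_inj; rewrite ?inE.
Qed.

Lemma lindelof_Fsigma_subcover (T : topologicalType) {I : choiceType} (i0 : I)
    [K : nat -> set T] [V : I -> set T] :
  lindelof T -> (forall n, closed (K n)) -> (forall i, open (V i)) ->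
  \bigcup_n K n `<=` \bigcup_i V i ->
  exists g : nat -> I, \bigcup_n K n `<=` \bigcup_n V (g n).
Proof.
move=> lT cK oV KV.
have /choice [J J_spec] n :
    exists J : set I, countable J /\ K n `<=` \bigcup_(i in J) V i.
  have [|J cJ KJ] := lindelof_closed_cover lT (cK n) oV; last by exists J.
  by move=> x Knx; apply: KV; exists n.
have [g Jg] : exists g : nat -> I, \bigcup_n J n `<=` range g.
  apply: (countable_sub_range i0); apply: bigcup_countable => [|n _].
    exact: countableP.
  by case: (J_spec n).
exists g => x [n _ Knx]; have [i Jni Vix] := (J_spec n).2 x Knx.
have [m _ gmi] : range g i by apply: Jg; exists n.
by exists m; rewrite ?gmi.
Qed.

Lemma lindelof_image (T U : topologicalType) (f : T -> U) :
  continuous f -> (forall y, exists x, f x = y) -> lindelof T -> lindelof U.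
Proof.
move=> cf f_surj lT I V oV V_cover.
have fV_cover : \bigcup_i (f @^-1` V i) = [set: T].
  apply/seteqP; split => // x _; have : [set: U] (f x) by [].
  by rewrite -V_cover => -[i _ Vfx]; exists i.
have [|J [cJ JV]] := lT _ _ _ fV_cover.
  by move=> i; apply: open_comp => // x _; exact: cf.
exists J; split => //; apply/seteqP; split => // y _; have [x <-] := f_surj y.
by have : [set: T] x by []; rewrite -JV => -[i Ji Vfx]; exists i.
Qed.

Lemma open_map_nbhs (T U : topologicalType) (f : T -> U) [x : T] [A : set T] :
  open_map f -> nbhs x A -> nbhs (f x) (f @` A).
Proof.
move=> f_open Ax; apply: (@filterS _ _ _ (f @` A°)).
  by move=> _ [y Ay <-]; exists y => //; exact: interior_subset.
by apply: open_nbhs_nbhs; split; [apply: f_open; exact: open_interior | exists x].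
Qed.

Lemma basically_disconnected_open_image (T U : topologicalType) (f : T -> U) :
  continuous f -> open_map f -> (forall y, exists x, f x = y) ->
  basically_disconnected T -> basically_disconnected U.
Proof.
move=> cf f_open f_surj bdT g cg.
have cgf : continuous (g \o f).
  by move=> x; apply: continuous_comp; [exact: cf | exact: cg].
suff -> : closure (cozero g) = f @` closure (cozero (g \o f)) by apply/f_open/bdT.
apply/seteqP; split => [y|_ [x clx <-]].
  have [x <-] := f_surj y => clfx; exists x => // Q Qx.
  have [b [gb [q Qq qb]]] := clfx _ (open_map_nbhs f_open Qx).
  by exists q; split; rewrite // /cozero /= qb.
move=> P /cf /clx [z [gfz Pfz]]; by exists (f z).
Qed.

Lemma basically_disconnected_clopen_subspace (T : topologicalType) (K : set T) :
  basically_disconnected T -> clopen K -> basically_disconnected (set_type K).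
Proof.
move=> bdT [oK cK] f cf.
pose F : T -> R := valL f.
have F_val z : F (set_val z) = f z by have := congr1 (@^~ z) (valLK 0 f).
have F_out x : ~ K x -> F x = 0.
  move=> nKx; rewrite /F /valL_ /= oinv_set_val /= insubN //.
  by apply/negP => /set_mem.
have cF : continuous F.
  move=> x; have [Kx|nKx] := pselect (K x).
    have : {in K, continuous F}.
      rewrite -continuous_open_subspace //.
      exact: (@subspace_valL_continuousP _ K _ f).2.
    by apply; exact: mem_set.
  have nKc : nbhs x (~` K) by apply: open_nbhs_nbhs; split => //; exact: closed_openC.
  apply: cvg_near_cst; apply: filterS nKc => y nKy.
  by rewrite !F_out.
suff -> : closure (cozero f) = set_val @^-1` closure (cozero F).
  by apply: open_comp (bdT _ cF) => x _; exact: initial_continuous.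
apply/seteqP; split => z.
  move=> clz P Pz; have [q [/= fq Pq]] := clz _ (initial_continuous Pz).
  by exists (set_val q); split => //; rewrite /cozero /= F_val.
move=> /= clz Q; rewrite subspace_subtypeP /nbhs /= -nbhs_subspace_in //; last first.
  exact: set_valP.
move=> /clz [y [Fy Qy]].
have Ky : K y by apply: contrapT => /F_out.
have [q Qq qy] := Qy Ky.
by exists q; split => //; rewrite /cozero /= -F_val qy.
Qed.

(** * Topological groups *)

Section GroupAxioms.
Context {G : Type} (mul : G -> G -> G) (inv : G -> G) (e : G).
Hypothesis grpG : is_group mul inv e.

Lemma grp_mulA x y z : mul x (mul y z) = mul (mul x y) z. Proof. by case: grpG. Qed.
Lemma grp_mul1g x : mul e x = x. Proof. by case: grpG. Qed.
Lemma grp_mulg1 x : mul x e = x. Proof. by case: grpG. Qed.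
Lemma grp_mulVg x : mul (inv x) x = e. Proof. by case: grpG. Qed.
Lemma grp_mulgV x : mul x (inv x) = e. Proof. by case: grpG. Qed.

Lemma grp_mulKg x y : mul (inv x) (mul x y) = y.
Proof. by rewrite grp_mulA grp_mulVg grp_mul1g. Qed.

Lemma grp_mulKVg x y : mul x (mul (inv x) y) = y.
Proof. by rewrite grp_mulA grp_mulgV grp_mul1g. Qed.

Lemma grp_mulgK x y : mul (mul y x) (inv x) = y.
Proof. by rewrite -grp_mulA grp_mulgV grp_mulg1. Qed.

Lemma grp_inv_uniq x y : mul x y = e -> y = inv x.
Proof. by move=> xy1; rewrite -[y](grp_mulKg x) xy1 grp_mulg1. Qed.

Lemma grp_invgK x : inv (inv x) = x.
Proof. by symmetry; apply: grp_inv_uniq; rewrite grp_mulVg. Qed.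

Lemma grp_invMg x y : inv (mul x y) = mul (inv y) (inv x).
Proof. by symmetry; apply: grp_inv_uniq; rewrite -grp_mulA grp_mulKVg grp_mulgV. Qed.

Lemma grp_invg1 : inv e = e.
Proof. by symmetry; apply: grp_inv_uniq; rewrite grp_mul1g. Qed.

Lemma grp_invg_involutive [x] : mul x x = e -> inv x = x.
Proof. by move=> xx1; symmetry; apply: grp_inv_uniq. Qed.

Lemma grp_commute_involutions x y :
  mul x x = e -> mul y y = e -> mul (mul x y) (mul x y) = e -> mul x y = mul y x.
Proof.
move=> xx1 yy1 xyxy1.
by rewrite -(grp_invg_involutive xyxy1) grp_invMg !grp_invg_involutive.
Qed.

Lemma grp_centralizer_subgroup (X : set G) :
  subgroup mul inv e [set x | forall w, X w -> mul x w = mul w x].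
Proof.
split=> [w _ | x y cx cy w Xw | x cx w Xw] /=.
- by rewrite grp_mul1g grp_mulg1.
- by rewrite -grp_mulA cy // grp_mulA cx // grp_mulA.
- have -> : mul (inv x) w = mul (mul (inv x) (mul w x)) (inv x).
    by rewrite grp_mulA grp_mulgK.
  by rewrite -cx // grp_mulKg.
Qed.

End GroupAxioms.

Section TopologicalGroup.
Context {G : topologicalType} (mul : G -> G -> G) (inv : G -> G) (e : G).
Hypothesis tgG : topological_group mul inv e.
Let grpG : is_group mul inv e. Proof. by case: tgG. Qed.

Lemma nbhs_mul_split [x y A] : nbhs (mul x y) A ->
  exists Q R, [/\ nbhs x Q, nbhs y R & forall a b, Q a -> R b -> A (mul a b)].
Proof.
case: tgG => _ mul_cont _ /(mul_cont (x, y)) [[Q R] /= [Qx Ry] QRA].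
by exists Q, R; split => // a b Qa Rb; apply: (QRA (a, b)).
Qed.

Lemma continuous_lmul a : continuous (mul a).
Proof.
move=> x A /nbhs_mul_split [Q [R [Qa Rx QRA]]].
by apply: filterS Rx => b Rb; apply: QRA => //; apply: nbhs_singleton.
Qed.

Lemma continuous_rmul a : continuous (mul^~ a).
Proof.
move=> x A /nbhs_mul_split [Q [R [Qx Ra QRA]]].
by apply: filterS Qx => b Qb; apply: QRA => //; apply: nbhs_singleton.
Qed.

Lemma continuous_inv : continuous inv.
Proof. by case: tgG. Qed.

Lemma continuous_square : continuous (fun x => mul x x).
Proof.
move=> x A /nbhs_mul_split [Q [R [Qx Rx QRA]]].
by apply: filterS (filterI Qx Rx) => y [Qy Ry]; apply: QRA.
Qed.

Lemma nbhs1_mul_split [U] : nbhs e U ->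
  exists2 V, nbhs e V & forall a b, V a -> V b -> U (mul a b).
Proof.
rewrite -{1}(grp_mul1g grpG e) => /nbhs_mul_split [Q [R [Qe Re QRU]]].
by exists (Q `&` R); [exact: filterI | move=> a b [Qa _] [_ Rb]; apply: QRU].
Qed.

Lemma nbhs1_inv [U] : nbhs e U -> nbhs e [set y | U (inv y)].
Proof. by rewrite -{1}(grp_invg1 grpG); apply: continuous_inv. Qed.

Lemma nbhs1_translate x [U] : nbhs e U -> nbhs x [set y | U (mul (inv x) y)].
Proof. by rewrite -{1}(grp_mulVg grpG x); apply: continuous_lmul. Qed.

End TopologicalGroup.

Section GroupUniformity.
Context {G : topologicalType} (mul : G -> G -> G) (inv : G -> G) (e : G).
Hypothesis tgG : topological_group mul inv e.
Let grpG : is_group mul inv e. Proof. by case: tgG. Qed.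
Local Open Scope relation_scope.

Definition left_entourage : set_system (G * G) :=
  [set E | exists2 U, nbhs e U & forall x y, U (mul (inv x) y) -> E (x, y)].

Lemma left_entourage_filter : Filter left_entourage.
Proof.
split.
- by exists setT => //; apply: filterT.
- move=> P Q [U Ue UP] [V Ve VQ]; exists (U `&` V); first exact: filterI.
  by move=> x y [Uxy Vxy]; split; [apply: UP | apply: VQ].
- by move=> P Q PQ [U Ue UP]; exists U => // x y /UP /PQ.
Qed.

Lemma left_entourage_diagonal A : left_entourage A -> diagonal `<=` A.
Proof.
case=> U Ue UA [x y]; rewrite /diagonal /= => <-; apply: UA; rewrite (grp_mulVg grpG).
exact: nbhs_singleton.
Qed.

Lemma left_entourage_inv A : left_entourage A -> left_entourage A^-1.
Proof.
case=> U Ue UA; exists [set y | U (inv y)]; first exact: (nbhs1_inv tgG).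
by move=> x y; rewrite /= (grp_invMg grpG) (grp_invgK grpG); exact: UA.
Qed.

Lemma left_entourage_split A :
  left_entourage A -> exists2 B, left_entourage B & B \; B `<=` A.
Proof.
case=> U Ue UA; have [V Ve VVU] := nbhs1_mul_split tgG Ue.
exists [set xy | V (mul (inv xy.1) xy.2)]; first by exists V.
move=> [x z] [y /= Vxy Vyz]; apply: UA.
by rewrite -(grp_mulKVg grpG y z) (grp_mulA grpG); apply: VVU.
Qed.

End GroupUniformity.

Definition left_uniform_space (G : topologicalType) (mul : G -> G -> G)
  (inv : G -> G) (e : G) of topological_group mul inv e : Type := G.

HB.instance Definition _ (G : topologicalType) (mul : G -> G -> G) (inv : G -> G)
  (e : G) (tgG : topological_group mul inv e) :=
  Choice.on (left_uniform_space tgG).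
HB.instance Definition _ (G : topologicalType) (mul : G -> G -> G) (inv : G -> G)
  (e : G) (tgG : topological_group mul inv e) :=
  @isUniform.Build (left_uniform_space tgG) (left_entourage mul inv e)
    (left_entourage_filter mul inv e) (@left_entourage_diagonal _ _ _ _ tgG)
    (@left_entourage_inv _ _ _ _ tgG) (@left_entourage_split _ _ _ _ tgG).

Lemma tgroup_completely_regular (G : topologicalType) (mul : G -> G -> G)
    (inv : G -> G) (e : G) :
  topological_group mul inv e -> completely_regular_space G.
Proof.
move=> tgG x B cB nBx; have grpG : is_group mul inv e by case: tgG.
have Bcx : nbhs x (~` B) by apply: open_nbhs_nbhs; split => //; exact: closed_openC.
exists (Uniform.class (left_uniform_space tgG)),
  [set xy | ~ B (mul x (mul (inv xy.1) xy.2))]; split.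
- exists [set z | ~ B (mul x z)] => //.
  by move: Bcx; rewrite -{1}[x](grp_mulg1 grpG); exact: (continuous_lmul tgG).
- by apply/seteqP; split => // -[a b] [[/= -> Bb]]; rewrite (grp_mulKVg grpG).
- move=> z A [E [U Ue UE] EA]; apply: filterS (nbhs1_translate tgG z Ue).
  by move=> y Uy; apply: EA; apply/xsectionP; exact: UE.
Qed.

Section BooleanNeighbourhood.
Context {G : topologicalType} (mul : G -> G -> G) (inv : G -> G) (e : G).
Hypotheses (tgG : topological_group mul inv e) (bdG : basically_disconnected G).
Let grpG : is_group mul inv e. Proof. by case: tgG. Qed.

Lemma clopen_nbhs_disjoint_inv (x : G) : closed [set e] -> mul x x <> e ->
  exists C, [/\ clopen C, C x & C `&` inv @^-1` C = set0].
Proof.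
move=> ce xx_ne.
have : nbhs (mul x x) (~` [set e]).
  by apply: open_nbhs_nbhs; split => //; exact: closed_openC.
move=> /(nbhs_mul_split tgG) [Q [R [Qx Rx QR_ne]]].
have crG := tgroup_completely_regular tgG.
have [C [clopenC Cx CQR]] := basically_disconnected_clopen_nbhs crG bdG (filterI Qx Rx).
exists C; split => //; apply/seteqP; split => // y [Cy Ciy].
have [Qiy _] := CQR _ Ciy; have [_ Ry] := CQR _ Cy.
by apply: (QR_ne _ _ Qiy Ry); rewrite (grp_mulVg grpG).
Qed.

Lemma non_involutions_clopen_cover : lindelof G -> closed [set e] -> G_delta [set e] ->
  exists c : nat -> set G, [/\ forall n, clopen (c n),
    forall n, c n `&` inv @^-1` c n = set0 &
    [set x | mul x x <> e] `<=` \bigcup_n c n].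
Proof.
move=> lG ce [W [oW eW]].
have W_e n : W n e by have : [set e] e by []; rewrite eW; apply.
pose O := [set x | mul x x <> e].
have /choice [C C_spec] x : exists C : set G,
    [/\ clopen C, C `&` inv @^-1` C = set0 & O x -> C x].
  have [Ox|nOx] := pselect (O x); last first.
    by exists set0; split => //; [exact: clopen0 | rewrite set0I].
  by have [C [? ? ?]] := clopen_nbhs_disjoint_inv ce Ox; exists C.
have clopenC x : clopen (C x) by case: (C_spec x).
have oC x : open (C x) by case: (clopenC x).
pose K n := [set x | ~ W n (mul x x)].
have cK n : closed (K n).
  exact: (@preimage_closed _ _ (fun x => mul x x) (~` W n)
    (fun x _ => continuous_square tgG x) (open_closedC (oW n))).
have K_C : \bigcup_n K n `<=` \bigcup_x C x.
  move=> x [n _ Knx]; exists x => //; case: (C_spec x) => _ _; apply.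
  by move=> xx1; apply: Knx; rewrite xx1; exact: W_e.
have O_K : O `<=` \bigcup_n K n.
  move=> x Ox; apply: contrapT => nKx; apply: Ox.
  have : (\bigcap_n W n) (mul x x).
    by move=> n _; apply: contrapT => nW; apply: nKx; exists n.
  by rewrite -eW.
have [g Kg] := lindelof_Fsigma_subcover e lG cK oC K_C.
exists (C \o g); split => [n | n | x /O_K /Kg //].
- exact: clopenC.
- by case: (C_spec (g n)).
Qed.

Lemma boolean_nbhs1 : lindelof G -> closed [set e] -> G_delta [set e] ->
  exists2 B, nbhs e B & boolean_set mul e B.
Proof.
move=> lG ce Ge; set O := [set x | mul x x <> e].
have [c [clopen_c c_inv0 O_cover]] := non_involutions_clopen_cover lG ce Ge.
have [A [clopenA AA0 A_cover]] :=
  clopen_involution_split (grp_invgK grpG) (continuous_inv tgG) clopen_c c_inv0.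
have [f cf fA] := bigcup_clopen_cozero clopenA.
have oA : open (\bigcup_k A k) by apply: bigcup_open => k _; case: (clopenA k).
have notin_cl := @involution_fixpoint_notin_closure _ _ (grp_invgK grpG)
  (continuous_inv tgG) _ _ (grp_invg1 grpG).
have e_notin_clA : ~ closure (\bigcup_k A k) e.
  by apply: notin_cl => //; rewrite -fA; exact: bdG.
have e_notin_clAi : ~ closure (inv @^-1` \bigcup_k A k) e.
  apply: notin_cl.
  - by apply: open_comp => // x _; exact: (continuous_inv tgG).
  - by rewrite -preimage_setI AA0 preimage_set0.
  - rewrite -fA -[_ @^-1` _]/(cozero (f \o inv)); apply: bdG.
    by move=> x; apply: continuous_comp; [exact: (continuous_inv tgG) | exact: cf].
have e_notin_clO : ~ closure O e.
  move=> clOe; have := closureS (subset_trans O_cover A_cover) clOe.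
  by rewrite closureU => -[].
exists (~` closure O).
  by apply: open_nbhs_nbhs; split => //; exact/closed_openC/closed_closure.
by move=> x nclOx; apply: contrapT => xx_ne; exact/nclOx/subset_closure.
Qed.

End BooleanNeighbourhood.

Section GeneratedSubgroup.
Context {G : Type} (mul : G -> G -> G) (inv : G -> G) (e : G).
Hypothesis grpG : is_group mul inv e.

Definition generated_subgroup (V : set G) : set G :=
  [set x | forall S, subgroup mul inv e S -> V `<=` S -> S x].

Lemma generated_subgroupP V : subgroup mul inv e (generated_subgroup V).
Proof.
split=> [S [] // | x y Vx Vy S S_grp VS | x Vx S S_grp VS].
- by case: (S_grp) => _ S_mul _; apply: S_mul; [exact: Vx | exact: Vy].
- by case: (S_grp) => _ _ S_inv; apply: S_inv; exact: Vx.
Qed.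

Lemma sub_generated_subgroup V : V `<=` generated_subgroup V.
Proof. by move=> x Vx S _; apply. Qed.

Lemma generated_subgroup_boolean V : V e ->
  (forall a b, V a -> V b -> mul (mul a b) (mul a b) = e) ->
  boolean_set mul e (generated_subgroup V).
Proof.
move=> Ve V_bool.
have V_inv a : V a -> mul a a = e.
  by move=> Va; have := V_bool _ _ Va Ve; rewrite (grp_mulg1 grpG).
have V_comm a b : V a -> V b -> mul a b = mul b a.
  by move=> Va Vb; apply: (grp_commute_involutions grpG); auto.
pose K := generated_subgroup V.
have K_comm_V k w : K k -> V w -> mul k w = mul w k.
  move=> Kk Vw; apply: (Kk _ (grp_centralizer_subgroup grpG V)) => // a Va b Vb.
  exact: V_comm.
have K_comm k k' : K k -> K k' -> mul k k' = mul k' k.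
  move=> Kk Kk'; apply: (Kk _ (grp_centralizer_subgroup grpG K)) => // w Vw b Kb.
  by symmetry; apply: K_comm_V.
move=> x Kx; suff [] : (K `&` [set x | mul x x = e]) x by [].
apply: Kx => [|a Va]; last by split; [exact: sub_generated_subgroup | exact: V_inv].
have [K1 K_mul _] := generated_subgroupP V.
split=> [|a b [Ka aa1] [Kb bb1] | a [Ka aa1]].
- by split; [exact: K1 | rewrite /= (grp_mul1g grpG)].
- split; first exact: K_mul.
  rewrite /= {2}(K_comm _ _ Ka Kb) -(grp_mulA grpG) [mul b (mul b a)](grp_mulA grpG).
  by rewrite bb1 (grp_mul1g grpG) aa1.
- by rewrite (grp_invg_involutive grpG aa1); split.
Qed.

End GeneratedSubgroup.

Section OpenSubgroup.
Context {G : topologicalType} (mul : G -> G -> G) (inv : G -> G) (e : G).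
Hypothesis tgG : topological_group mul inv e.
Let grpG : is_group mul inv e. Proof. by case: tgG. Qed.

Lemma subgroup_nbhs1_clopen K : subgroup mul inv e K -> nbhs e K -> clopen K.
Proof.
move=> [_ K_mul K_inv] Ke; split.
  rewrite openE => x Kx; apply: filterS (nbhs1_translate tgG x Ke) => y /= Kxy.
  by rewrite -(grp_mulKVg grpG x y); exact: K_mul.
move=> x /(_ _ (nbhs1_translate tgG x Ke)) [k [Kk /= Kxk]].
rewrite -[x](grp_mulgK grpG (mul (inv x) k)) (grp_mulKVg grpG).
by apply: K_mul => //; exact: K_inv.
Qed.

Lemma boolean_nbhs1_clopen_subgroup : (exists2 B, nbhs e B & boolean_set mul e B) ->
  exists K, [/\ subgroup mul inv e K, clopen K & boolean_set mul e K].
Proof.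
case=> B Be B_bool; have [V Ve VVB] := nbhs1_mul_split tgG Be.
exists (generated_subgroup mul inv e V); split.
- exact: generated_subgroupP.
- apply: subgroup_nbhs1_clopen; first exact: generated_subgroupP.
  by apply: filterS Ve; exact: sub_generated_subgroup.
- apply: (generated_subgroup_boolean grpG); first exact: nbhs_singleton.
  by move=> a b Va Vb; apply: B_bool; exact: VVB.
Qed.

End OpenSubgroup.


(** * Quotient groups *)

Section CosetSpace.
Local Open Scope quotient_scope.
Context {G : topologicalType} (mul : G -> G -> G) (inv : G -> G) (e : G).
Hypothesis tgG : topological_group mul inv e.
Variable N : set G.
Hypothesis N_normal : normal_subgroup mul inv e N.
Let grpG : is_group mul inv e. Proof. by case: tgG. Qed.

Let N1 : N e. Proof. by case: N_normal => -[]. Qed.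
Let NM x y : N x -> N y -> N (mul x y).
Proof. by case: N_normal => -[_ + _] _; apply. Qed.
Let NV x : N x -> N (inv x). Proof. by case: N_normal => -[_ _ +] _; apply. Qed.
Let NJ a x : N x -> N (mul (mul a x) (inv a)).
Proof. by case: N_normal => _; apply. Qed.

Definition coset_rel : rel G := fun x y => `[< N (mul (inv x) y) >].

Lemma coset_rel_refl : reflexive coset_rel.
Proof. by move=> x; apply/asboolP; rewrite (grp_mulVg grpG). Qed.

Lemma coset_rel_sym : symmetric coset_rel.
Proof.
by move=> x y; apply/asboolP/asboolP => /NV; rewrite (grp_invMg grpG) (grp_invgK grpG).
Qed.

Lemma coset_rel_trans : transitive coset_rel.
Proof.
move=> y x z /asboolP Nxy /asboolP Nyz; apply/asboolP.
by have := NM Nxy Nyz; rewrite -(grp_mulA grpG) (grp_mulKVg grpG).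
Qed.

Definition coset_equiv :=
  EquivRel coset_rel coset_rel_refl coset_rel_sym coset_rel_trans.
Definition coset_space := quotient_topology {eq_quot coset_equiv}.
Definition coset_proj : G -> coset_space := \pi_coset_space.

Lemma coset_projP x y : coset_proj x = coset_proj y <-> N (mul (inv x) y).
Proof. by split=> [/eqmodP/asboolP | Nxy]; last exact/eqmodP/asboolP. Qed.

Lemma coset_proj_surj (a : coset_space) : exists x, a = coset_proj x.
Proof. by exists (repr a); rewrite /coset_proj reprK. Qed.

Definition coset_mul (a b : coset_space) := coset_proj (mul (repr a) (repr b)).
Definition coset_inv (a : coset_space) := coset_proj (inv (repr a)).
Definition coset_one := coset_proj e.

Lemma coset_projM x y : coset_proj (mul x y) = coset_mul (coset_proj x) (coset_proj y).
Proof.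
rewrite /coset_mul; apply/coset_projP.
have /coset_projP Nx : coset_proj (repr (coset_proj x)) = coset_proj x by exact: reprK.
have /coset_projP Ny : coset_proj (repr (coset_proj y)) = coset_proj y by exact: reprK.
move: (repr _) (repr _) Nx Ny => x' y' Nx Ny.
have := NM (NJ (inv y) (NV Nx)) (NV Ny).
by rewrite ?(grp_invMg grpG) ?(grp_invgK grpG) -?(grp_mulA grpG) ?(grp_mulKVg grpG).
Qed.

Lemma coset_projV x : coset_proj (inv x) = coset_inv (coset_proj x).
Proof.
rewrite /coset_inv; apply/coset_projP.
have /coset_projP Nx : coset_proj (repr (coset_proj x)) = coset_proj x by exact: reprK.
move: (repr _) Nx => x' Nx; have := NJ x Nx.
by rewrite ?(grp_invMg grpG) ?(grp_invgK grpG) -?(grp_mulA grpG) ?(grp_mulKVg grpG)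
  ?(grp_mulgV grpG) ?(grp_mulg1 grpG).
Qed.

Lemma coset_proj_continuous : continuous coset_proj.
Proof. exact: pi_continuous. Qed.

Lemma coset_openP (U : set coset_space) : open U <-> open (coset_proj @^-1` U).
Proof. by []. Qed.

Lemma coset_proj_open : open_map coset_proj.
Proof.
move=> A oA; apply/coset_openP; rewrite openE => y [x Ax /coset_projP Nyx].
have : nbhs y [set z | A (mul z (mul (inv y) x))].
  apply: (continuous_rmul tgG (mul (inv y) x) y).
  by rewrite (grp_mulKVg grpG); exact: open_nbhs_nbhs.
apply: filterS => z /= Azyx.
exists (mul z (mul (inv y) x)) => //; apply/coset_projP.
rewrite !(grp_invMg grpG) -(grp_mulA grpG) (grp_mulVg grpG) (grp_mulg1 grpG).
by rewrite (grp_invgK grpG).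
Qed.

Lemma coset_proj_ker : N = coset_proj @^-1` [set coset_one].
Proof.
apply/seteqP; split => x /=.
  by move=> Nx; apply/coset_projP; rewrite (grp_mulg1 grpG); exact: NV.
by move/coset_projP; rewrite (grp_mulg1 grpG) => /NV; rewrite (grp_invgK grpG).
Qed.

Lemma coset_tgroup : topological_group coset_mul coset_inv coset_one.
Proof.
have group_law : is_group coset_mul coset_inv coset_one.
  split=> [a b c | a | a | a | a]; have [x ->] := coset_proj_surj a.
  - have [y ->] := coset_proj_surj b; have [z ->] := coset_proj_surj c.
    by rewrite -!coset_projM (grp_mulA grpG).
  - by rewrite /coset_one -coset_projM (grp_mul1g grpG).
  - by rewrite /coset_one -coset_projM (grp_mulg1 grpG).
  - by rewrite /coset_one -coset_projV -coset_projM (grp_mulVg grpG).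
  - by rewrite /coset_one -coset_projV -coset_projM (grp_mulgV grpG).
have proj_nbhs x A : nbhs x A -> nbhs (coset_proj x) (coset_proj @` A).
  exact: open_map_nbhs coset_proj_open.
split => //.
- move=> [a b] A /=; have [x ->] := coset_proj_surj a; have [y ->] := coset_proj_surj b.
  rewrite -coset_projM => /coset_proj_continuous /(nbhs_mul_split tgG).
  move=> [Q [R [Qx Ry QRA]]].
  exists (coset_proj @` Q, coset_proj @` R); first by split; exact: proj_nbhs.
  by move=> [_ _] /= [[x' Qx' <-] [y' Ry' <-]]; rewrite -coset_projM; exact: QRA.
- move=> a A /=; have [x ->] := coset_proj_surj a; rewrite -coset_projV.
  move=> /coset_proj_continuous /(continuous_inv tgG) /proj_nbhs.
  by apply: filterS => _ [x' Ax' <-]; rewrite /= -coset_projV.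
Qed.

Lemma coset_one_closed : closed N -> closed [set coset_one].
Proof.
move=> cN; rewrite -openC coset_openP.
have -> : coset_proj @^-1` (~` [set coset_one]) = ~` N by rewrite coset_proj_ker.
exact: closed_openC.
Qed.

Lemma coset_nondiscrete : ~ open N -> ~ discrete_top coset_space.
Proof.
by move=> nN discrete; apply: nN; rewrite coset_proj_ker; apply/coset_openP/discrete.
Qed.

Lemma coset_pseudocharacter [V : nat -> set G] : (forall n, open (V n)) ->
  N = \bigcap_n V n ->
  (forall n, exists m, forall a b, V m a -> N b -> V n (mul a b)) ->
  countable_pseudocharacter coset_one.
Proof.
move=> oV N_V V_step; exists (fun n => coset_proj @` V n); split.
  by move=> n; exact: coset_proj_open.
apply/seteqP; split => [_ -> n _ | a].
  by exists e => //; move: N1; rewrite N_V; apply.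
have [x ->] := coset_proj_surj a => x_in; apply/esym/coset_projP.
rewrite (grp_invg1 grpG) (grp_mul1g grpG) N_V => n _.
have [m Vm_N] := V_step n; have [v Vv /coset_projP Nvx] := x_in m I.
by have := Vm_N _ _ Vv Nvx; rewrite (grp_mulKVg grpG).
Qed.

End CosetSpace.

(** * Small closed normal subgroups of Lindelof groups *)

Section LindelofGroup.
Context {G : topologicalType} (mul : G -> G -> G) (inv : G -> G) (e : G).
Hypothesis tgG : topological_group mul inv e.
Let grpG : is_group mul inv e. Proof. by case: tgG. Qed.

Lemma nbhs1_root [U] : open U -> U e -> exists R, [/\ open R, R e,
  forall a b, R a -> R b -> U (mul a b) & forall a, R a -> U (inv a)].
Proof.
move=> oU Ue; have [V Ve VVU] := nbhs1_mul_split tgG (open_nbhs_nbhs (conj oU Ue)).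
exists (V° `&` inv @^-1` U); split.
- apply: openI; first exact: open_interior.
  by apply: open_comp => // x _; exact: (continuous_inv tgG).
- by split; [exact: Ve | rewrite /= (grp_invg1 grpG)].
- by move=> a b [/interior_subset Va _] [/interior_subset Vb _]; exact: VVU.
- by move=> a [].
Qed.

Hypothesis lG : lindelof G.

Lemma lindelof_conj_nbhs1 [U] : nbhs e U -> exists V : nat -> set G,
  (forall n, open (V n) /\ V n e) /\
  forall x, exists n, forall y, V n y -> U (mul (mul x y) (inv x)).
Proof.
move=> Ue.
have [W We WWU] := nbhs1_mul_split tgG Ue.
have [W' W'e WWW] := nbhs1_mul_split tgG We.
pose S := (W' `&` W) `&` [set y | (W' `&` W) (inv y)].
have Se : nbhs e S.
  by apply: filterI; [exact: filterI | exact: (nbhs1_inv tgG) (filterI W'e We)].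
have SSS a b c : S a -> S b -> S c -> U (mul a (mul b c)).
  by move=> [[_ Wa] _] [[W'b _] _] [[W'c _] _]; apply: WWU => //; exact: WWW.
have S_inv a : S a -> S (inv a).
  by move=> [Sa Sia]; split => //=; rewrite (grp_invgK grpG).
pose O i := [set y | S° (mul y (inv i))].
have oO i : open (O i).
  apply: open_comp; last exact: open_interior.
  by move=> y _; exact: (continuous_rmul tgG).
have O_cover : \bigcup_i O i = [set: G].
  apply/seteqP; split => // y _; exists y => //.
  by rewrite /O /= (grp_mulgV grpG); exact: nbhs_singleton (nbhs_interior Se).
have [J [cJ JO]] := lG O oO O_cover.
have [xs Jxs] := countable_sub_range e cJ.
exists (fun n => [set y | S° (mul (mul (xs n) y) (inv (xs n)))]); split.
  move=> n; split; last first.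
    rewrite /= (grp_mulg1 grpG) (grp_mulgV grpG).
    exact: nbhs_singleton (nbhs_interior Se).
  apply: (@open_comp _ _ (fun y => mul (mul (xs n) y) (inv (xs n))) S°); last first.
    exact: open_interior.
  move=> y _.
  exact: (continuous_comp (continuous_lmul tgG (xs n) y) (continuous_rmul tgG _ _)).
move=> x; have : [set: G] x by [].
rewrite -JO => -[i Ji Oix]; have [n _ xsn] := Jxs i Ji.
exists n => y /=; rewrite xsn => /interior_subset Sy.
have Sa : S (mul x (inv i)) by exact: interior_subset.
have := SSS _ _ _ Sa Sy (S_inv _ Sa).
by rewrite ?(grp_invMg grpG) ?(grp_invgK grpG) -?(grp_mulA grpG) ?(grp_mulKg grpG).
Qed.

End LindelofGroup.

(* Words over these steps index a countable family of neighbourhoods of e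
   that contains every [base m] and is closed under [root] and under the
   narrowness witnesses [narrow U n]; its intersection is the subgroup N. *)
Inductive nbhs_step := Root | Conj of nat | Base of nat.

Definition nbhs_step_encode (s : nbhs_step) : option (nat + nat) :=
  match s with Root => None | Conj n => Some (inl n) | Base m => Some (inr m) end.

Definition nbhs_step_decode (o : option (nat + nat)) : nbhs_step :=
  match o with None => Root | Some (inl n) => Conj n | Some (inr m) => Base m end.

Lemma nbhs_step_encodeK : cancel nbhs_step_encode nbhs_step_decode.
Proof. by case. Qed.

HB.instance Definition _ := Countable.copy nbhs_step (can_type nbhs_step_encodeK).

Section NbhsCodes.
Context {G : topologicalType} (mul : G -> G -> G) (inv : G -> G) (e : G).
Hypothesis tgG : topological_group mul inv e.
Let grpG : is_group mul inv e. Proof. by case: tgG. Qed.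

Variables (root : set G -> set G) (narrow : set G -> nat -> set G).
Variable base : nat -> set G.
Hypothesis root_spec : forall U, open U -> U e -> [/\ open (root U), root U e,
  forall a b, root U a -> root U b -> U (mul a b) & forall a, root U a -> U (inv a)].
Hypothesis narrow_spec : forall U, open U -> U e ->
  (forall n, open (narrow U n) /\ narrow U n e) /\
  forall x, exists n, forall y, narrow U n y -> U (mul (mul x y) (inv x)).
Hypothesis base_spec : forall m, open (base m) /\ base m e.

Definition step_nbhs (s : nbhs_step) (U : set G) : set G :=
  match s with Root => root U | Conj n => narrow U n | Base m => base m `&` U end.

Definition code_nbhs (c : seq nbhs_step) : set G := foldr step_nbhs setT c.

Definition code_kernel : set G := [set x | forall c, code_nbhs c x].

Lemma code_nbhs_open c : open (code_nbhs c) /\ code_nbhs c e.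
Proof.
elim: c => [|[|n|m] c [oU Ue]] /=; first by split; [exact: openT |].
- by case: (root_spec _ oU Ue).
- by case: (narrow_spec _ oU Ue) => /(_ n).
- by case: (base_spec m) => oB Be; split; [exact: openI |].
Qed.

Lemma code_nbhs_root c :
  (forall a b, code_nbhs (Root :: c) a -> code_nbhs (Root :: c) b ->
     code_nbhs c (mul a b)) /\
  (forall a, code_nbhs (Root :: c) a -> code_nbhs c (inv a)).
Proof. by have [oU Ue] := code_nbhs_open c; case: (root_spec _ oU Ue). Qed.

Lemma code_kernel_normal : normal_subgroup mul inv e code_kernel.
Proof.
split; first split.
- by move=> c; case: (code_nbhs_open c).
- by move=> x y Nx Ny c; apply: (code_nbhs_root c).1; [exact: Nx | exact: Ny].
- by move=> x Nx c; apply: (code_nbhs_root c).2; exact: Nx.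
move=> g x Nx c; have [oU Ue] := code_nbhs_open c.
have [_ /(_ g) [n narrow_n]] := narrow_spec _ oU Ue.
by apply: narrow_n; exact: (Nx (Conj n :: c)).
Qed.

Lemma code_kernel_closed : closed code_kernel.
Proof.
move=> x clx c; have [oR Re] := code_nbhs_open [:: Root, Root & c].
have [k [Nk /= Rxk]] := clx _ (nbhs1_translate tgG x (open_nbhs_nbhs (conj oR Re))).
rewrite -[x](grp_mulgK grpG (mul (inv x) k)) (grp_mulKVg grpG).
apply: (code_nbhs_root c).1; first exact: (Nk (Root :: c)).
exact: (code_nbhs_root (Root :: c)).2.
Qed.

Lemma code_kernel_sub_base m : code_kernel `<=` base m.
Proof. by move=> x /(_ [:: Base m]) []. Qed.

Lemma code_kernel_Gdelta : exists V : nat -> set G, [/\ forall n, open (V n),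
  code_kernel = \bigcap_n V n &
  forall n, exists m, forall a b, V m a -> code_kernel b -> V n (mul a b)].
Proof.
pose V n := code_nbhs (odflt [::] (unpickle n)).
exists V; split.
- by move=> n; case: (code_nbhs_open (odflt [::] (unpickle n))).
- apply/seteqP; split => [x Nx n _ | x Vx c]; first exact: Nx.
  by have := Vx (pickle c) I; rewrite /V pickleK.
- move=> n; exists (pickle (Root :: odflt [::] (unpickle n))) => a b.
  rewrite /V pickleK /= => Ra Nb.
  by apply: (code_nbhs_root _).1 => //; exact: (Nb (Root :: _)).
Qed.

End NbhsCodes.

Section SmallNormalSubgroup.
Context {G : topologicalType} (mul : G -> G -> G) (inv : G -> G) (e : G).
Hypotheses (tgG : topological_group mul inv e) (lG : lindelof G).

Lemma lindelof_Gdelta_normal_subgroup [U : nat -> set G] :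
  (forall m, open (U m) /\ U m e) ->
  exists N, [/\ closed N, normal_subgroup mul inv e N, N `<=` \bigcap_m U m &
    exists V : nat -> set G, [/\ forall n, open (V n), N = \bigcap_n V n &
      forall n, exists m, forall a b, V m a -> N b -> V n (mul a b)]].
Proof.
move=> U_spec.
have /choice [root root_spec] (W : set G) : exists R, open W -> W e ->
    [/\ open R, R e, forall a b, R a -> R b -> W (mul a b)
       & forall a, R a -> W (inv a)].
  have [[oW We]|nW] := pselect (open W /\ W e); last by exists W => oW We; case: nW.
  by have [R ?] := nbhs1_root tgG oW We; exists R.
have /choice [narrow narrow_spec] (W : set G) :
    exists V : nat -> set G, open W -> W e ->
    (forall n, open (V n) /\ V n e) /\
    forall x, exists n, forall y, V n y -> W (mul (mul x y) (inv x)).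
  have [[oW We]|nW] := pselect (open W /\ W e); last first.
    by exists (fun=> W) => oW We; case: nW.
  have [V ?] := lindelof_conj_nbhs1 tgG lG (open_nbhs_nbhs (conj oW We)).
  by exists V.
exists (code_kernel root narrow U); split.
- exact: (code_kernel_closed tgG root_spec narrow_spec U_spec).
- by apply: code_kernel_normal.
- by move=> x Nx m _; exact: (code_kernel_sub_base m Nx).
- exact: (code_kernel_Gdelta mul inv root narrow U root_spec narrow_spec U_spec).
Qed.

End SmallNormalSubgroup.

Lemma not_P_space_nbhs1 (G : topologicalType) (mul : G -> G -> G) (inv : G -> G)
    (e : G) :
  topological_group mul inv e -> ~ P_space G ->
  exists U : nat -> set G,
    (forall m, open (U m) /\ U m e) /\ ~ nbhs e (\bigcap_m U m).
Proof.
move=> tgG nP; have grpG : is_group mul inv e by case: tgG.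
have [A [[F [oF AF]] nA]] : exists A : set G, G_delta A /\ ~ open A.
  apply: contrapT => /forallNP noA; apply: nP => A GA.
  by apply: contrapT; have /not_andP[] := noA A.
have [a [Aa na]] : exists a, A a /\ ~ nbhs a A.
  apply: contrapT => /forallNP noa; apply: nA; rewrite openE => a Aa.
  by apply: contrapT; have /not_andP[] := noa a.
exists (fun m => [set y | F m (mul a y)]); split.
  move=> m; split; last by rewrite /= (grp_mulg1 grpG); move: Aa; rewrite AF; exact.
  by apply: open_comp (oF m) => y _; exact: (continuous_lmul tgG).
move=> Ue; apply: na; apply: filterS (nbhs1_translate tgG a Ue) => y /= Uy.
by rewrite AF => m _; have /= := Uy m I; rewrite (grp_mulKVg grpG).
Qed.

Theorem theorem2 (G : topologicalType) (mul : G -> G -> G) (inv : G -> G) (e : G) :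
  topological_group mul inv e ->
  hausdorff_space G ->
  lindelof G ->
  basically_disconnected G ->
  P_space G \/
  exists N : set G,
    closed N /\ normal_subgroup mul inv e N /\
    exists (H : topologicalType) (mulH : H -> H -> H) (invH : H -> H) (eH : H)
           (f : G -> H),
      [/\ topological_group mulH invH eH,
          quotient_group_by mul mulH eH N f,
          ~ discrete_top H,
          countable_pseudocharacter eH &
          exists K : set H,
            [/\ subgroup mulH invH eH K, open K,
                boolean_set mulH eH K &
                basically_disconnected (set_type K)]].
Proof.
move=> tgG _ lG bdG; have [PG|nPG] := pselect (P_space G); [by left | right].
have [U [U_spec nU]] := not_P_space_nbhs1 tgG nPG.
have [N [cN N_normal NU [V [oV NV V_step]]]] :=
  lindelof_Gdelta_normal_subgroup tgG lG U_spec.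
exists N; split => //; split => //.
pose p := coset_proj tgG N_normal.
have tgH := coset_tgroup tgG N_normal.
have p_cont : continuous p := coset_proj_continuous (N_normal := N_normal).
have p_open : open_map p := coset_proj_open tgG N_normal.
have p_surj y : exists x, p x = y by have [x ->] := coset_proj_surj y; exists x.
have bdH := basically_disconnected_open_image p_cont p_open p_surj bdG.
have psH := coset_pseudocharacter tgG N_normal oV NV V_step.
have lH := lindelof_image p_cont p_surj lG.
have T1H := coset_one_closed (tgG := tgG) (N_normal := N_normal) cN.
have [K [K_grp [oK cK] K_bool]] :=
  boolean_nbhs1_clopen_subgroup tgH (boolean_nbhs1 tgH bdH lH T1H psH).
exists (coset_space tgG N_normal), (coset_mul (N_normal := N_normal)),
  (coset_inv (N_normal := N_normal)), (coset_one tgG N_normal), p; split => //.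
- by split => //; [exact: coset_projM | exact: coset_proj_ker].
- apply: coset_nondiscrete => oN; apply: nU; apply: filterS NU _.
  by apply: open_nbhs_nbhs; split => //; have [[N1 _ _] _] := N_normal.
- exists K; split => //; exact: basically_disconnected_clopen_subspace.
Qed.
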